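(* Let $q$ be an odd prime power and $f(X)=X(X^{q-1}-c)^{q+1}$ on $\mathbb{F}_{q^2}$, with $a,\beta,g,L_{[u:v]},\mathbb{P}^1$ as in the context. If $c\in\mathbb{F}_q\setminus\{0,1,-1\}$, then $\mathcal{G}(f)$ is isomorphic to \[ \mathcal{C}_1\oplus\bigoplus_{L_{[u:v]}\in\mathbb{P}^1}\frac{q-1}{\operatorname{ord}(g(u,v))}\times\mathcal{C}_{\operatorname{ord}(g(u,v))}. \] If $c=\pm1$, then $\mathcal{G}(f)$ is isomorphic to \[ (\mathcal{C}_1,\mathcal{T}_{q-1})\oplus\bigoplus_{L_{[u:v]}\in\mathbb{P}^1\setminus\{L_0\}}\frac{q-1}{\operatorname{ord}(g(u,v))}\times\mathcal{C}_{\operatorname{ord}(g(u,v))}, \] where $L_0=L_{[1:0]}$ if $c=1$ and $L_0=L_{[0:1]}$ if $c=-1$.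
   Context: $a\in\mathbb{F}_q^*$ is a non-square in $\mathbb{F}_q$, $\beta\in\mathbb{F}_{q^2}$ with $\beta^2=a$; every element of $\mathbb{F}_{q^2}$ is uniquely $x+y\beta$, $x,y\in\mathbb{F}_q$. For $(x,y)\neq(0,0)$, $g(x,y)=\frac{(1-c)^2x^2-(1+c)^2y^2a}{x^2-y^2a}\in\mathbb{F}_q$, which is invariant under scaling $(x,y)$ by $\mathbb{F}_q^*$. For $(u,v)\neq(0,0)$, $L_{[u:v]}=\{\lambda(u+v\beta):\lambda\in\mathbb{F}_q\}$ and $\mathbb{P}^1$ is the set of these $q+1$ lines; $\operatorname{ord}(g(u,v))$ is the multiplicative order in $\mathbb{F}_q^*$. $\mathcal{G}(f)$ is the functional graph (vertices $\mathbb{F}_{q^2}$, edges $\langle x,f(x)\rangle$). Graph notation: $\mathcal{C}_n$ is an oriented cycle of length $n$; $\mathcal{T}_m$ is the directed tree with $m+1$ vertices $P_1,\dots,P_{m+1}$ and edges $P_i\to P_{m+1}$ for $1\le i\le m$; $(\mathcal{C}_n,\mathcal{T}_m)$ is the graph obtained by replacing each vertex of $\mathcal{C}_n$ by a copy of $\mathcal{T}_m$ (identifying the cycle vertex with the root $P_{m+1}$); $\mathcal{G}\oplus\mathcal{H}$ is disjoint union; $k\times\mathcal{H}$ is the disjoint union of $k$ copies of $\mathcal{H}$. *)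

From HB Require Import structures.
From mathcomp Require Import all_boot all_order all_algebra all_fingroup.
Set Implicit Arguments. Unset Strict Implicit. Unset Printing Implicit Defensive.
Import GRing.Theory.
Local Open Scope ring_scope.

Record fgraph := FGraph { fg_sort :> finType; fg_fun : fg_sort -> fg_sort }.

Definition fg_iso (G H : fgraph) : Prop :=
  exists h : G -> H, bijective h /\
    forall x y : G, (@fg_fun G x == y) = (@fg_fun H (h x) == h y).

Definition Ccycle (n : nat) : fgraph := @FGraph 'I_n (@ordS n).

(* (C_n, T_m): each cycle vertex replaced by a copy of T_m (None = root P_{m+1},
   Some j = leaf P_{j+1} pointing to the root). *)
Definition CT (n m : nat) : fgraph :=
  @FGraph ('I_n * option 'I_m)%type
    (fun p => match p.2 with
              | None => (ordS p.1, None)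
              | Some _ => (p.1, None) end).

Definition fg_sum (G H : fgraph) : fgraph :=
  @FGraph (G + H)%type
    (fun p => match p with
              | inl x => inl (@fg_fun G x)
              | inr y => inr (@fg_fun H y) end).

Definition fg_copies (k : nat) (H : fgraph) : fgraph :=
  @FGraph ('I_k * H)%type (fun p => (p.1, @fg_fun H p.2)).

Definition fg_big (I : finType) (G : I -> fgraph) : fgraph :=
  @FGraph {i : I & G i}
    (fun p => Tagged (fun i => fg_sort (G i)) (@fg_fun (G (tag p)) (tagged p))).

Definition fgraph_of (T : finType) (f : T -> T) : fgraph := @FGraph T f.

Section FqSq.
Variables (F : finFieldType) (q : nat) (a beta : F).

Definition Fq : {set F} := [set x : F | x ^+ q == x].

Definition gfun (c x y : F) : F :=
  ((1 - c) ^+ 2 * x ^+ 2 - (1 + c) ^+ 2 * y ^+ 2 * a) / (x ^+ 2 - y ^+ 2 * a).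

Definition Lline (u v : F) : {set F} := [set l * (u + v * beta) | l in Fq].

Definition P1 : {set {set F}} :=
  [set Lline uv.1 uv.2 | uv in [set uv : F * F |
     (uv.1 \in Fq) && (uv.2 \in Fq) && (uv != (0, 0))]].

Definition line_rep (L : {set F}) : F * F :=
  odflt (1, 0) [pick uv : F * F | (uv.1 \in Fq) && (uv.2 \in Fq)
                                   && (uv != (0, 0)) && (L == Lline uv.1 uv.2)].

Definition mord (x : F) : nat :=
  match insub x : option {unit F} with Some u => #[u]%g | None => 0%N end.

(* ord(g(u,v)) for the line L = L_[u:v] (g is invariant under scaling). *)
Definition ordL (c : F) (L : {set F}) : nat :=
  mord (gfun c (line_rep L).1 (line_rep L).2).

Definition lines_part (c : F) (S : {set {set F}}) : fgraph :=
  @fg_big {L : {set F} | L \in S}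
    (fun L => fg_copies ((q - 1) %/ ordL c (val L)) (Ccycle (ordL c (val L)))).

End FqSq.

Definition fpoly (F : finFieldType) (q : nat) (c : F) (x : F) : F :=
  x * (x ^+ (q - 1) - c) ^+ (q + 1).

(* Write x = u + v beta with u, v in F_q.  Then x ^ (q - 1) = conj x / x has norm 1, so
   h(x) = (x ^ (q - 1) - c) ^ (q + 1) is a norm, lies in F_q, is invariant under F_q^*
   scaling, and equals g(u, v).  Hence f(x) = h(x) x maps each punctured line
   L_[u:v] \ {0} to itself and acts there as multiplication by g(u, v) in F_q: when
   g(u, v) != 0 the q - 1 points split into cycles of length ord(g(u, v)).  For x != 0,
   h(x) = 0 means x ^ (q - 1) = c, which forces c ^ 2 = c ^ (q + 1) = 1; for c = 1
   (resp. c = -1) this happens exactly on L_[1:0] (resp. L_[0:1]), which f collapses onto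
   the fixed point 0. *)

From Pilot Require Import Defs.
From HB Require Import structures.
From mathcomp Require Import all_boot all_order all_algebra all_fingroup.
From mathcomp Require Import cyclic finfield zify ring.
Import GRing.Theory FinRing.Theory.

Set Implicit Arguments. Unset Strict Implicit. Unset Printing Implicit Defensive.

(** * Embeddings of functional graphs *)

Definition embeds_onto (H : Defs.fgraph) (T : finType) (f : T -> T) (k : H -> T) (S : {set T}) :=
  [/\ injective k, forall x, k (fg_fun x) = f (k x),
      forall x, k x \in S & forall y, y \in S -> exists x, k x = y].

Section Embeddings.
Variables (T : finType) (f : T -> T).

Lemma fg_iso_embeds_onto (H : Defs.fgraph) (k : H -> T) :
  embeds_onto f k setT -> fg_iso (fgraph_of f) H.
Proof.
move=> [k_inj k_hom _ k_onto].
have k_codom y : y \in codom k by apply/codomP; have [x <-] := k_onto y (in_setT y); exists x.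
pose h y := iinv (k_codom y).
have hK : cancel h k by move=> y; rewrite f_iinv.
have kK : cancel k h by move=> x; apply: k_inj; rewrite hK.
exists h; split; first by exists k.
by move=> x y; rewrite -(inj_eq k_inj) k_hom !hK.
Qed.

Lemma embeds_onto_C1 x0 : f x0 = x0 -> embeds_onto f (fun _ : Ccycle 1 => x0) [set x0].
Proof.
move=> fx0; split=> [i j _ | // | _ | y]; rewrite ?inE //; first by rewrite !ord1.
by move/eqP->; exists ord0.
Qed.

Lemma embeds_onto_CT1 m x0 (S : {set T}) : f x0 = x0 -> x0 \notin S -> #|S| = m ->
  (forall y, y \in S -> f y = x0) ->
  embeds_onto f (fun p : CT 1 m => if p.2 is Some j then nth x0 (enum S) j else x0)
    (x0 |: S).
Proof.
move=> fx0 x0S cardS fS.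
have leafS (j : 'I_m) : nth x0 (enum S) j \in S by rewrite -mem_enum mem_nth // -cardE cardS.
split.
- move=> [i [j|]] [i' [j'|]] /=; rewrite !(ord1 i) !(ord1 i') //.
  + move/eqP; rewrite nth_uniq ?enum_uniq // -?cardE ?cardS // => /eqP jj.
    by congr (_, Some _); apply: val_inj.
  + by move=> eq_x0; move: (leafS j); rewrite eq_x0 (negPf x0S).
  + by move=> eq_x0; move: (leafS j'); rewrite -eq_x0 (negPf x0S).
- by move=> [i [j|]] /=; rewrite ?fx0 ?fS.
- by move=> [i [j|]] /=; rewrite !inE ?eqxx ?leafS ?orbT.
move=> y; rewrite !inE => /predU1P [-> | yS]; first by exists (ord0, None).
have jm : (index y (enum S) < m)%N by rewrite -cardS cardE index_mem mem_enum.
by exists (ord0, Some (Ordinal jm)); rewrite /= nth_index ?mem_enum.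
Qed.

Lemma embeds_onto_sum (G1 G2 : Defs.fgraph) (k1 : G1 -> T) (k2 : G2 -> T) (S1 S2 : {set T}) :
  embeds_onto f k1 S1 -> embeds_onto f k2 S2 -> [disjoint S1 & S2] ->
  embeds_onto f (fun p : fg_sum G1 G2 => match p with inl x => k1 x | inr y => k2 y end)
    (S1 :|: S2).
Proof.
move=> [inj1 hom1 in1 onto1] [inj2 hom2 in2 onto2] dis.
have k12 x y : k1 x != k2 y.
  by apply: contraTneq dis => eq12; apply/pred0Pn; exists (k1 x); rewrite /= in1 eq12 in2.
split.
- move=> [x|y] [x'|y'] //= eqk; first by rewrite (inj1 _ _ eqk).
  + by have := k12 x y'; rewrite eqk eqxx.
  + by have := k12 x' y; rewrite eqk eqxx.
  + by rewrite (inj2 _ _ eqk).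
- by move=> [x|y] /=.
- by move=> [x|y]; rewrite inE ?in1 ?in2 ?orbT.
move=> z; rewrite inE => /orP [/onto1 [x <-] | /onto2 [y <-]]; first by exists (inl x).
by exists (inr y).
Qed.

Lemma embeds_onto_big (I : finType) (G : I -> Defs.fgraph) (k : forall i, G i -> T)
    (S : I -> {set T}) :
  (forall i, embeds_onto f (k i) (S i)) ->
  (forall i j, i != j -> [disjoint S i & S j]) ->
  embeds_onto f (fun p : fg_big G => k (tag p) (tagged p)) (\bigcup_i S i).
Proof.
move=> kS dis; split.
- move=> [i x] [j y] /= eqk.
  have [ij | ij] := eqVneq i j.
    by subst j; have [inj _ _ _] := kS i; rewrite (inj _ _ eqk).
  have [_ _ inx _] := kS i; have [_ _ iny _] := kS j.
  by have /pred0Pn[] := dis _ _ ij; exists (k i x); rewrite /= inx eqk iny.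
- by move=> [i x]; have [_ hom _ _] := kS i; apply: hom.
- by move=> [i x]; have [_ _ inx _] := kS i; apply/bigcupP; exists i.
move=> y /bigcupP [i _ yS]; have [_ _ _ /(_ y yS) [x <-]] := kS i.
by exists (Tagged (fun i => fg_sort (G i)) x).
Qed.

End Embeddings.

(** * Cycle decomposition of a map of constant period *)

Section CycleDecomposition.
Variables (T : finType) (f : T -> T) (S : {set T}) (n : nat) (x0 : T).
Hypotheses (fS : forall x, x \in S -> f x \in S)
  (iter_eq : forall x j, x \in S -> (iter j f x == x) = (n %| j)) (n_gt0 : (0 < n)%N).

(* On each cycle we pick the point of least [enum_rank] as representative. *)
Definition cycle_reps : {set T} :=
  [set r in S | [forall j : 'I_n, enum_rank r <= enum_rank (iter j f r)]].

Definition cycle_enum d (p : 'I_d * 'I_n) : T := iter p.2 f (nth x0 (enum cycle_reps) p.1).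

Lemma iter_in x j : x \in S -> iter j f x \in S.
Proof. by move=> xS; elim: j => //= j IH; apply: fS. Qed.

Lemma iter_modn x j : x \in S -> iter j f x = iter (j %% n) f x.
Proof.
move=> xS; rewrite {1}(divn_eq j n) addnC iterD; congr iter.
by elim: (j %/ n) => // m IH; rewrite mulSn iterD IH; apply/eqP; rewrite iter_eq ?dvdnn.
Qed.

Lemma iter_subnK x j : x \in S -> (j <= n)%N -> iter (n - j) f (iter j f x) = x.
Proof. by move=> xS jn; rewrite -iterD subnK //; apply/eqP; rewrite iter_eq ?dvdnn. Qed.

Lemma cycle_repsS r : r \in cycle_reps -> r \in S.
Proof. by rewrite inE => /andP[]. Qed.

Lemma cycle_reps_min r j : r \in cycle_reps -> enum_rank r <= enum_rank (iter j f r).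
Proof.
rewrite inE => /andP[rS /forallP min_r].
by rewrite (iter_modn _ rS); apply: (min_r (Ordinal (ltn_pmod j n_gt0))).
Qed.

Let ncycles := #|cycle_reps|.

Lemma nth_cycle_reps (i : 'I_ncycles) : nth x0 (enum cycle_reps) i \in cycle_reps.
Proof. by rewrite -mem_enum mem_nth // -cardE. Qed.

Lemma cycle_enum_inj : injective (cycle_enum (d:=ncycles)).
Proof.
move=> [i j] [i' j']; rewrite /cycle_enum /=.
set r := nth _ _ i; set r' := nth _ _ i' => eq_ij.
have rR := nth_cycle_reps i; have rR' := nth_cycle_reps i'.
have rS := cycle_repsS rR; have rS' := cycle_repsS rR'.
have r_r' : r = iter (n - j + j') f r' by rewrite iterD -eq_ij iter_subnK // ltnW.
have r'_r : r' = iter (n - j' + j) f r by rewrite iterD eq_ij iter_subnK // ltnW.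
have rr' : r = r'.
  apply: enum_rank_inj; apply/val_inj/eqP; rewrite eqn_leq.
  by apply/andP; split; [rewrite {1}r'_r | rewrite {1}r_r']; apply: cycle_reps_min.
have ii' : i = i'.
  apply/val_inj/eqP; rewrite -(nth_uniq x0 _ _ (enum_uniq (mem cycle_reps))) -?cardE ?ltn_ord //.
  exact/eqP.
have /eqP : iter (n - j' + j) f r = r by rewrite -r'_r -rr'.
rewrite iter_eq // => /dvdnP [m jj']; rewrite -ii'; congr (_, _); apply/val_inj => /=.
by move: jj' (ltn_ord j) (ltn_ord j'); case: m => [|[|m]] /=; lia.
Qed.

Lemma cycle_enum_onto x : x \in S -> exists p, cycle_enum (d:=ncycles) p = x.
Proof.
move=> xS; have [j0 _ min_j0] := @arg_minnP _ (Ordinal n_gt0) xpredT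
  (fun j : 'I_n => enum_rank (iter j f x)) isT.
set r := iter j0 f x.
have rR : r \in cycle_reps.
  rewrite inE iter_in //=; apply/forallP => j; rewrite /r -iterD [iter (j + j0) _ _](iter_modn _ xS).
  exact: (min_j0 (Ordinal (ltn_pmod _ n_gt0)) isT).
have ir : (index r (enum cycle_reps) < ncycles)%N by rewrite /ncycles cardE index_mem mem_enum.
exists (Ordinal ir, Ordinal (ltn_pmod (n - j0) n_gt0)).
by rewrite /cycle_enum /= nth_index ?mem_enum // -iter_modn ?iter_subnK ?iter_in // ltnW.
Qed.

Lemma card_cycles : #|S| = (ncycles * n)%N.
Proof.
have -> : (ncycles * n)%N = #|{: 'I_ncycles * 'I_n}| by rewrite card_prod !card_ord.
rewrite -(card_image cycle_enum_inj); apply: eq_card => x; apply/idP/mapP.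
  by move=> /cycle_enum_onto [p <-]; exists p; rewrite ?mem_enum.
by move=> [[i j] _ ->]; apply/iter_in/cycle_repsS/nth_cycle_reps.
Qed.

Lemma embeds_onto_cycles d : d = (#|S| %/ n)%N ->
  embeds_onto f (cycle_enum (d:=d) : fg_copies d (Ccycle n) -> T) S.
Proof.
rewrite card_cycles mulnK // => ->; split.
- exact: cycle_enum_inj.
- move=> [i j]; rewrite /cycle_enum /= -iterS.
  by rewrite [RHS](iter_modn _ (cycle_repsS (nth_cycle_reps i))).
- by move=> [i j]; apply/iter_in/cycle_repsS/nth_cycle_reps.
- exact: cycle_enum_onto.
Qed.

End CycleDecomposition.

Local Open Scope ring_scope.

Lemma mordP (F : finFieldType) (x : F) j : x != 0 -> (x ^+ j == 1) = (mord x %| j)%N.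
Proof.
move=> x0; have xU : x \is a GRing.unit by rewrite unitfE.
by rewrite /mord insubT order_dvdn -val_eqE /= val_unitX SubK.
Qed.

Lemma mord_gt0 (F : finFieldType) (x : F) : x != 0 -> (0 < mord x)%N.
Proof. by move=> x0; rewrite /mord insubT ?unitfE // order_gt0. Qed.

(** * The quadratic extension F / F_q and its lines *)

Section QuadraticExtension.
Variables (F : finFieldType) (q : nat).
Hypotheses (q_pchar : [pchar F].-nat q) (cardF : #|F| = (q ^ 2)%N).

Local Notation Fq := (Fq F q).

Lemma q_gt1 : (1 < q)%N.
Proof. by have := card_finNzRing_gt1 F; rewrite cardF; case: q => [|[|]]. Qed.

Lemma q_gt0 : (0 < q)%N.
Proof. exact: ltnW q_gt1. Qed.

Lemma frobD (x y : F) : (x + y) ^+ q = x ^+ q + y ^+ q.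
Proof. exact: exprDn_pchar. Qed.

Lemma frobN (x : F) : (- x) ^+ q = - x ^+ q.
Proof. exact: exprNn_pchar. Qed.

Lemma frobB (x y : F) : (x - y) ^+ q = x ^+ q - y ^+ q.
Proof. by rewrite frobD frobN. Qed.

Lemma frobK (x : F) : (x ^+ q) ^+ q = x.
Proof. by rewrite -exprM mulnn -cardF expf_card. Qed.

Lemma expq1_mul (x : F) : x ^+ (q - 1) * x = x ^+ q.
Proof. by rewrite -exprSr subn1 prednK ?q_gt0. Qed.

Lemma FqP (x : F) : reflect (x ^+ q = x) (x \in Fq).
Proof. by rewrite inE; apply: eqP. Qed.

Lemma Fq0 : 0 \in Fq.
Proof. by apply/FqP; rewrite expr0n gtn_eqF ?q_gt0. Qed.

Lemma Fq1 : 1 \in Fq.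
Proof. by apply/FqP; rewrite expr1n. Qed.

Lemma FqD (x y : F) : x \in Fq -> y \in Fq -> x + y \in Fq.
Proof. by move=> /FqP xq /FqP yq; apply/FqP; rewrite frobD xq yq. Qed.

Lemma FqN (x : F) : x \in Fq -> - x \in Fq.
Proof. by move=> /FqP xq; apply/FqP; rewrite frobN xq. Qed.

Lemma FqB (x y : F) : x \in Fq -> y \in Fq -> x - y \in Fq.
Proof. by move=> xq yq; rewrite FqD ?FqN. Qed.

Lemma FqM (x y : F) : x \in Fq -> y \in Fq -> x * y \in Fq.
Proof. by move=> /FqP xq /FqP yq; apply/FqP; rewrite exprMn xq yq. Qed.

Lemma FqV (x : F) : x \in Fq -> x^-1 \in Fq.
Proof. by move=> /FqP xq; apply/FqP; rewrite exprVn xq. Qed.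

Lemma FqX (x : F) j : x \in Fq -> x ^+ j \in Fq.
Proof. by move=> xq; elim: j => [|j IH]; rewrite ?Fq1 // exprS FqM. Qed.

Lemma Fq_expq1 (x : F) : x != 0 -> (x ^+ (q - 1) == 1) = (x \in Fq).
Proof.
move=> x0; rewrite inE -expq1_mul; apply/eqP/eqP => [-> | e]; first by rewrite mul1r.
by apply: (mulIf x0); rewrite mul1r.
Qed.

Lemma expq1_norm (x : F) : x != 0 -> (x ^+ (q - 1)) ^+ (q + 1) = 1.
Proof.
move=> x0; apply: (mulIf x0); rewrite mul1r -exprM -exprSr.
suff -> : ((q - 1) * (q + 1)).+1 = #|F| by rewrite expf_card.
by rewrite cardF; have := q_gt0; nia.
Qed.

Variables (a beta : F).
Hypotheses (aFq : a \in Fq) (a_nonsquare : forall b, b \in Fq -> b ^+ 2 != a)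
  (beta_sq : beta ^+ 2 = a).

Local Notation Lline := (Lline q beta).
Local Notation P1 := (P1 q beta).

Lemma beta_notin_Fq : beta \notin Fq.
Proof. by apply/negP => /a_nonsquare; rewrite beta_sq eqxx. Qed.

Lemma beta_neq0 : beta != 0.
Proof. by apply: contraNneq beta_notin_Fq => ->; apply: Fq0. Qed.

(* [beta ^+ q] is a square root of [a ^+ q = a] other than [beta]. *)
Lemma frob_beta : beta ^+ q = - beta.
Proof.
have : (beta ^+ q - beta) * (beta ^+ q + beta) = 0.
  by rewrite -subr_sqr -exprM mulnC exprM beta_sq; move/FqP: aFq => ->; rewrite subrr.
move/eqP; rewrite mulf_eq0 subr_eq0 addr_eq0 => /orP [bq | /eqP //].
by move: beta_notin_Fq; rewrite inE bq.
Qed.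

(* In characteristic 2 we would have [- beta = beta], i.e. [beta \in Fq]. *)
Lemma two_neq0 : (2 : F) != 0.
Proof.
apply: contraNneq beta_notin_Fq => two0; apply/FqP.
by apply/eqP; rewrite frob_beta eq_sym -addr_eq0 -mulr2n -mulr_natl two0 mul0r.
Qed.

Lemma Fq_decomp (x : F) :
  exists u v, [/\ u \in Fq, v \in Fq & x = u + v * beta].
Proof.
have two_q : (2 : F) ^+ q = 2 by apply/FqP; rewrite FqD ?Fq1.
have [b0 t0] := (beta_neq0, two_neq0).
exists ((x + x ^+ q) / 2), ((x - x ^+ q) / (2 * beta)); split.
- by apply/FqP; rewrite exprMn exprVn frobD // frobK // two_q addrC.
- apply/FqP; rewrite exprMn exprVn frobB // frobK // exprMn two_q frob_beta.
  by rewrite mulrN invrN mulrN -mulNr opprB.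
- by field; rewrite b0 t0.
Qed.

Lemma Fq_decomp_uniq (u v u' v' : F) : u \in Fq -> v \in Fq ->
  u' \in Fq -> v' \in Fq -> u + v * beta = u' + v' * beta -> u = u' /\ v = v'.
Proof.
move=> uq vq u'q v'q e.
suff vv' : v = v' by split=> //; apply: (addIr (v * beta)); rewrite {2}vv'.
apply/eqP; rewrite -subr_eq0; apply: contraNT beta_notin_Fq => dv0.
have -> : beta = (u' - u) / (v - v').
  apply: (mulIf dv0); rewrite divfK //; apply/eqP; rewrite -subr_eq0; apply/eqP.
  by rewrite -[RHS](subrr (u + v * beta)) {2}e; ring.
by rewrite FqM ?FqV ?FqB.
Qed.

Lemma card_Fq : #|Fq| = q.
Proof.
pose g (uv : F * F) := uv.1 + uv.2 * beta.
have g_inj : {in setX (Fq) (Fq) &, injective g}.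
  move=> [u v] [u' v']; rewrite !in_setX /= => /andP[uq vq] /andP[u'q v'q] e.
  by have [-> ->] := Fq_decomp_uniq uq vq u'q v'q e.
have g_onto : g @: setX (Fq) (Fq) = [set: F].
  apply/setP => x; rewrite inE; have [u [v [uq vq ->]]] := Fq_decomp x.
  by apply/imsetP; exists (u, v); rewrite // in_setX uq vq.
have /eqP := card_in_imset g_inj; rewrite g_onto cardsT cardF cardsX mulnn.
by rewrite eqn_exp2r // => /eqP.
Qed.

Lemma Lline_gen_neq0 (u v : F) : u \in Fq -> v \in Fq -> (u, v) != (0, 0) ->
  u + v * beta != 0.
Proof.
move=> uq vq; apply: contra => /eqP uv0.
have e : u + v * beta = 0 + 0 * beta by rewrite uv0 mul0r addr0.
by have [-> ->] := Fq_decomp_uniq uq vq Fq0 Fq0 e.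
Qed.

Lemma LlineP (u v y : F) :
  reflect (exists2 l, l \in Fq & y = l * (u + v * beta)) (y \in Lline u v).
Proof. exact: imsetP. Qed.

Lemma Lline_in_P1 (u v : F) : u \in Fq -> v \in Fq -> (u, v) != (0, 0) -> Lline u v \in P1.
Proof. by move=> uq vq uv0; apply/imsetP; exists (u, v); rewrite // inE uq vq uv0. Qed.

Lemma P1P (L : {set F}) : L \in P1 ->
  exists u v, [/\ u \in Fq, v \in Fq, (u, v) != (0, 0) & L = Lline u v].
Proof. by case/imsetP=> [[u v]]; rewrite inE /= => /andP[/andP[uq vq] uv0] ->; exists u, v. Qed.

Lemma P1_scale (L : {set F}) (y : F) : L \in P1 -> y \in L :\ 0 ->
  L = [set m * y | m in Fq].
Proof.
case/P1P=> u [v [_ _ _ ->]] /setD1P [y0 /LlineP [l lq yl]].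
have l0 : l != 0 by apply: contraNneq y0 => l0; rewrite yl l0 mul0r.
apply/setP => z; apply/LlineP/imsetP => [[m mq ->] | [m mq ->]].
  by exists (m / l); rewrite ?FqM ?FqV // yl mulrA divfK.
by exists (m * l); rewrite ?FqM // yl mulrA.
Qed.

Lemma P1_scale_in (L : {set F}) (y m : F) : L \in P1 -> y \in L :\ 0 ->
  m \in Fq -> m != 0 -> m * y \in L :\ 0.
Proof.
move=> LP1 yL mq m0; have /setD1P [y0 _] := yL.
by rewrite !inE mulf_neq0 // (P1_scale LP1 yL); apply/imsetP; exists m.
Qed.

Lemma P1_disjoint (L L' : {set F}) : L \in P1 -> L' \in P1 -> L != L' ->
  [disjoint L :\ 0 & L' :\ 0].
Proof.
move=> LP1 L'P1; apply: contraNT => /pred0Pn [y /andP [yL yL']].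
by rewrite (P1_scale LP1 yL) (P1_scale L'P1 yL').
Qed.

Lemma P1_cover (y : F) : y != 0 -> exists2 L, L \in P1 & y \in L :\ 0.
Proof.
move=> y0; have [u [v [uq vq yuv]]] := Fq_decomp y.
have uv0 : (u, v) != (0, 0).
  by apply: contraNneq y0 => -[u0 v0]; rewrite yuv u0 v0 mul0r addr0.
exists (Lline u v); first exact: Lline_in_P1.
by rewrite !inE y0; apply/LlineP; exists 1; rewrite ?Fq1 ?mul1r.
Qed.

Lemma card_P1_punctured (L : {set F}) : L \in P1 -> #|L :\ 0| = (q - 1)%N.
Proof.
case/P1P=> u [v [uq vq uv0 ->]].
have cardL : #|Lline u v| = q.
  by rewrite card_in_imset ?card_Fq // => l m _ _; apply: mulIf; apply: Lline_gen_neq0.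
have L0 : 0 \in Lline u v by apply/LlineP; exists 0; rewrite ?Fq0 ?mul0r.
by move: cardL; rewrite (cardsD1 0) L0; set n := #|_ :\ 0|; lia.
Qed.

Lemma line_rep_spec (L : {set F}) : L \in P1 ->
  let uv := line_rep q beta L in
  [/\ uv.1 \in Fq, uv.2 \in Fq, uv != (0, 0) & L = Lline uv.1 uv.2].
Proof.
move=> LP1; rewrite /line_rep; case: pickP => [[u v] /andP [/andP [/andP [uq vq] uv0] /eqP eL] // | none].
have [u [v [uq vq uv0 eL]]] := P1P LP1.
by have := none (u, v); rewrite /= uq vq uv0 eL eqxx.
Qed.

Lemma mem_Lline10 (y : F) : (y \in Lline 1 0) = (y \in Fq).
Proof.
apply/LlineP/idP => [[l lq ->] | yq]; first by rewrite mul0r addr0 mulr1.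
by exists y; rewrite // mul0r addr0 mulr1.
Qed.

Lemma mem_Lline01 (y : F) : (y \in Lline 0 1) = (y / beta \in Fq).
Proof.
apply/LlineP/idP => [[l lq ->] | yq]; first by rewrite mul1r add0r mulfK ?beta_neq0.
by exists (y / beta); rewrite // mul1r add0r divfK ?beta_neq0.
Qed.

Lemma beta_expq1 : beta ^+ (q - 1) = -1.
Proof. by apply: (mulIf beta_neq0); rewrite expq1_mul frob_beta mulN1r. Qed.

Lemma expq1_eqN1 (y : F) : y != 0 -> (y ^+ (q - 1) == -1) = (y \in Lline 0 1).
Proof.
move=> y0; rewrite mem_Lline01 -Fq_expq1 ?mulf_neq0 ?invr_eq0 ?beta_neq0 //.
by rewrite exprMn exprVn beta_expq1 invrN invr1 mulrN1 -eqr_oppLR.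
Qed.

(** * The dynamics of [fpoly] on the lines *)

Section Dynamics.
Variable c : F.
Hypothesis cFq : c \in Fq.

Definition fcoef (y : F) : F := (y ^+ (q - 1) - c) ^+ (q + 1).

Lemma fpolyE (y : F) : fpoly q c y = fcoef y * y.
Proof. exact: mulrC. Qed.

Lemma fcoef_Fq (y : F) : fcoef y \in Fq.
Proof. by apply/FqP; rewrite /fcoef exprD expr1 exprMn frobK mulrC. Qed.

Lemma fcoef_scale (l y : F) : l \in Fq -> l != 0 -> fcoef (l * y) = fcoef y.
Proof. by move=> lq l0; rewrite /fcoef exprMn (eqP _ : l ^+ (q - 1) = 1) ?mul1r ?Fq_expq1. Qed.

Lemma fcoef_eq0 (y : F) : (fcoef y == 0) = (y ^+ (q - 1) == c).
Proof. by rewrite expf_eq0 addn1 subr_eq0. Qed.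

Lemma iter_fpoly j (y : F) : iter j (fpoly q c) y = fcoef y ^+ j * y.
Proof.
elim: j => [|j IH]; first by rewrite mul1r.
rewrite iterS IH fpolyE exprS -[in RHS]mulrA; have [-> | Gj0] := eqVneq (fcoef y ^+ j) 0.
  by rewrite !(mul0r, mulr0).
by rewrite fcoef_scale //; apply/FqX/fcoef_Fq.
Qed.

Lemma gfun_fcoef (u v : F) : u \in Fq -> v \in Fq -> (u, v) != (0, 0) ->
  gfun a c u v = fcoef (u + v * beta).
Proof.
move=> uq vq uv0; set y := u + v * beta; set y' := u - v * beta.
have y0 : y != 0 by apply: Lline_gen_neq0.
have y'0 : y' != 0.
  rewrite /y' -mulNr Lline_gen_neq0 ?FqN //.
  by apply: contraNneq uv0 => -[-> /eqP]; rewrite oppr_eq0 => /eqP ->.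
have frob_y : y ^+ q = y' by rewrite frobD exprMn (FqP _ uq) (FqP _ vq) frob_beta mulrN.
have frob_y' : y' ^+ q = y by rewrite frobB exprMn (FqP _ uq) (FqP _ vq) frob_beta mulrN opprK.
have w_y : y ^+ (q - 1) = y' / y by apply: (mulIf y0); rewrite expq1_mul divfK.
(* [fcoef y = (w - c) * (w ^+ q - c)] with [w = y ^+ (q - 1) = y' / y] and [w ^+ q = y / y']. *)
rewrite /fcoef exprD expr1 frobB (FqP _ cFq) w_y exprMn exprVn frob_y frob_y' /gfun -beta_sq.
have -> : u ^+ 2 - v ^+ 2 * beta ^+ 2 = y * y' by rewrite /y /y'; ring.
by rewrite /y /y'; field; rewrite y0 y'0.
Qed.

Lemma fcoef_P1 (L : {set F}) (y y' : F) : L \in P1 -> y \in L :\ 0 -> y' \in L :\ 0 ->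
  fcoef y' = fcoef y.
Proof.
move=> LP1 yL; rewrite {1}(P1_scale LP1 yL) !inE => /andP [y'0 /imsetP [m mq y'E]].
by rewrite y'E fcoef_scale //; apply: contraNneq y'0 => m0; rewrite y'E m0 mul0r.
Qed.

Lemma ordL_fcoef (L : {set F}) (y : F) : L \in P1 -> y \in L :\ 0 ->
  ordL q a beta c L = mord (fcoef y).
Proof.
move=> LP1 yL; rewrite /ordL; have := line_rep_spec LP1.
case: (line_rep q beta L) => u v /= [uq vq uv0 eL].
rewrite gfun_fcoef //; congr mord; apply: fcoef_P1 yL _ => //.
by rewrite !inE Lline_gen_neq0 // eL; apply/LlineP; exists 1; rewrite ?Fq1 ?mul1r.
Qed.

Definition line_enum (L : {set F}) :
    fg_copies ((q - 1) %/ ordL q a beta c L) (Ccycle (ordL q a beta c L)) -> F :=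
  @cycle_enum F (fpoly q c) (L :\ 0) (ordL q a beta c L) 0 ((q - 1) %/ ordL q a beta c L).
Arguments line_enum : clear implicits.

(* On a line [f] is multiplication by the constant [fcoef y \in Fq], so every point
   of [L :\ 0] has exact period [ordL L]. *)
Lemma embeds_onto_line (L : {set F}) : L \in P1 ->
  (forall y, y \in L :\ 0 -> fcoef y != 0) ->
  embeds_onto (fpoly q c) (line_enum L) (L :\ 0).
Proof.
move=> LP1 L_nondeg; apply: embeds_onto_cycles; last by rewrite card_P1_punctured.
- by move=> y yL; rewrite fpolyE P1_scale_in ?fcoef_Fq ?L_nondeg.
- move=> y j yL; have /setD1P [y0 _] := yL.
  rewrite iter_fpoly (ordL_fcoef LP1 yL) -mordP ?L_nondeg //.
  by rewrite -{3}[y]mul1r (inj_eq (mulIf y0)).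
- have [y yL] : exists y, y \in L :\ 0.
    by apply/set0Pn; rewrite -card_gt0 card_P1_punctured // subn_gt0 q_gt1.
  by rewrite (ordL_fcoef LP1 yL) mord_gt0 ?L_nondeg.
Qed.

Lemma embeds_onto_lines_part (S : {set {set F}}) : S \subset P1 ->
  (forall L y, L \in S -> y \in L :\ 0 -> fcoef y != 0) ->
  embeds_onto (fpoly q c)
    (fun p : lines_part q a beta c S => line_enum (val (tag p)) (tagged p))
    (\bigcup_(L : {L | L \in S}) (val L :\ 0)).
Proof.
move=> /subsetP SP1 S_nondeg.
apply: (embeds_onto_big (k := fun L => line_enum (val L)) (S := fun L => val L :\ 0)).
  move=> [L LS].
  by apply: embeds_onto_line; [apply: SP1 | move=> y; exact: S_nondeg LS].
by move=> [L LS] [L' L'S] LL'; apply: P1_disjoint; rewrite ?SP1.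
Qed.

Lemma fpoly0 : fpoly q c 0 = 0.
Proof. by rewrite fpolyE mulr0. Qed.

Lemma fg_iso_nondegenerate : (forall y, y != 0 -> fcoef y != 0) ->
  fg_iso (fgraph_of (fpoly q c)) (fg_sum (Ccycle 1) (lines_part q a beta c P1)).
Proof.
move=> nondeg; apply: fg_iso_embeds_onto.
have lines_nondeg L y : L \in P1 -> y \in L :\ 0 -> fcoef y != 0.
  by move=> _ /setD1P [y0 _]; apply: nondeg.
have lines := embeds_onto_lines_part (subxx P1) lines_nondeg.
suff <- : [set 0] :|: \bigcup_(L : {L | L \in P1}) (val L :\ 0) = setT.
  apply: embeds_onto_sum (embeds_onto_C1 fpoly0) lines _.
  by rewrite disjoints1; apply/bigcupP => -[L _]; rewrite !inE eqxx.
apply/setP => y; rewrite !inE; have [// | y0] := eqVneq y 0.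
by have [L LP1 yL] := P1_cover y0; apply/bigcupP; exists (exist _ L LP1).
Qed.

Lemma fg_iso_degenerate (L0 : {set F}) : L0 \in P1 ->
  (forall y, y != 0 -> (fcoef y == 0) = (y \in L0)) ->
  fg_iso (fgraph_of (fpoly q c))
    (fg_sum (CT 1 (q - 1)) (lines_part q a beta c (P1 :\ L0))).
Proof.
move=> L0P1 deg; apply: fg_iso_embeds_onto.
have L0_collapse y : y \in L0 :\ 0 -> fpoly q c y = 0.
  by case/setD1P=> y0 yL0; apply/eqP; rewrite fpolyE mulf_eq0 deg ?yL0.
have tree := embeds_onto_CT1 fpoly0 (negbT (setD11 0 L0)) (card_P1_punctured L0P1) L0_collapse.
have lines_nondeg L y : L \in P1 :\ L0 -> y \in L :\ 0 -> fcoef y != 0.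
  case/setD1P=> LL0 LP1 yL; have /setD1P [y0 _] := yL; rewrite deg //.
  by apply: contraTN yL => yL0; rewrite (disjointFr (P1_disjoint L0P1 LP1 _)) ?inE ?y0 // eq_sym.
have lines := embeds_onto_lines_part (subD1set _ _) lines_nondeg.
suff <- : (0 |: (L0 :\ 0)) :|: \bigcup_(L : {L | L \in P1 :\ L0}) (val L :\ 0) = setT.
  apply: embeds_onto_sum tree lines _; apply: bigcup_disjoint => -[L LS] _ /=.
  have /setD1P [LL0 LP1] := LS.
  rewrite disjoints_subset; apply/subsetP => y /setU1P [-> | yL0]; first by rewrite !inE eqxx.
  by rewrite inE (disjointFr (P1_disjoint L0P1 LP1 _) yL0) // eq_sym.
apply/setP => y; rewrite !inE; have [// | y0 /=] := eqVneq y 0.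
have [L LP1 yL] := P1_cover y0; have [eL | LL0] := eqVneq L L0.
  by move: yL; rewrite eL !inE => /andP [_ ->].
have LS : L \in P1 :\ L0 by rewrite !inE LL0.
by apply/orP; right; apply/bigcupP; exists (exist _ L LS).
Qed.

Lemma fcoef_neq0 (y : F) : c != 1 -> c != -1 -> y != 0 -> fcoef y != 0.
Proof.
move=> c1 cN1 y0; rewrite fcoef_eq0; apply/eqP => yc.
have : (c - 1) * (c + 1) = 0.
  by rewrite -subr_sqr expr1n -(expq1_norm y0) yc exprD expr1 (FqP _ cFq) -expr2 subrr.
by move/eqP; rewrite mulf_eq0 subr_eq0 addr_eq0 (negPf c1) (negPf cN1).
Qed.

End Dynamics.

Lemma fcoef1_eq0 (y : F) : y != 0 -> (fcoef 1 y == 0) = (y \in Lline 1 0).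
Proof. by move=> y0; rewrite fcoef_eq0 Fq_expq1 // mem_Lline10. Qed.

Lemma fcoefN1_eq0 (y : F) : y != 0 -> (fcoef (-1) y == 0) = (y \in Lline 0 1).
Proof. by move=> y0; rewrite fcoef_eq0 expq1_eqN1. Qed.

Lemma Lline10_in_P1 : Lline 1 0 \in P1.
Proof. by rewrite Lline_in_P1 ?Fq0 ?Fq1 // xpair_eqE oner_eq0. Qed.

Lemma Lline01_in_P1 : Lline 0 1 \in P1.
Proof. by rewrite Lline_in_P1 ?Fq0 ?Fq1 // xpair_eqE oner_eq0 andbF. Qed.

End QuadraticExtension.

Theorem mainTheorem6 (F : finFieldType) (q p k : nat) (a beta c : F) :
  prime p -> (0 < k)%N -> q = (p ^ k)%N -> odd q ->
  #|F| = (q ^ 2)%N ->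
  a \in Fq F q -> a != 0 -> (forall b : F, b \in Fq F q -> b ^+ 2 != a) ->
  beta ^+ 2 = a ->
  c \in Fq F q ->
  [/\ (c != 0 -> c != 1 -> c != -1 ->
         fg_iso (fgraph_of (fpoly q c))
           (fg_sum (Ccycle 1) (lines_part q a beta c (P1 q beta)))),
      (c = 1 ->
         fg_iso (fgraph_of (fpoly q c))
           (fg_sum (CT 1 (q - 1))
              (lines_part q a beta c (P1 q beta :\ Lline q beta 1 0)))) &
      (c = -1 ->
         fg_iso (fgraph_of (fpoly q c))
           (fg_sum (CT 1 (q - 1))
              (lines_part q a beta c (P1 q beta :\ Lline q beta 0 1))))].
Proof.
move=> p_prime _ qE _ cardF aFq _ a_nonsquare beta_sq cFq.
have q_pchar : [pchar F].-nat q.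
  have p_char : p \in [pchar F].
    by apply: (@card_finPcharP _ p (k * 2)); rewrite // cardF qE expnM.
  by rewrite qE pnatX (pnatE _ p_prime) p_char.
split=> [_ c1 cN1 | c1 | cN1].
- apply: fg_iso_nondegenerate => // y; exact: fcoef_neq0.
- rewrite c1 in cFq *; apply: fg_iso_degenerate; rewrite ?Lline10_in_P1 //.
  exact: fcoef1_eq0.
- rewrite cN1 in cFq *; apply: fg_iso_degenerate; rewrite ?Lline01_in_P1 //.
  exact: (fcoefN1_eq0 cardF aFq a_nonsquare beta_sq).
Qed.
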